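(* Let $G$ be a group. Suppose that for every integer $n\geq 1$ there exist a finitely generated group $K_n$ and an automorphism $f_n\colon K_n\to K_n$ such that (I) the subgroup $\{x\in K_n \mid f_n(x)=x\}$ of fixed points of $f_n$ is not finitely generated, and (II) $G$ contains a subgroup isomorphic to $K_n^n$, the direct product of $n$ copies of $K_n$. Then $G$ is intersection-saturated.
   Context: For an integer $n\geq 1$ write $[n]=\{1,\dots,n\}$. An $n$-configuration is a map $c\colon \mathcal{P}([n])\setminus\{\emptyset\}\to\{0,1\}$. An $n$-configuration $c$ is realisable in a group $G$ if there exist subgroups $H_1,\dots,H_n\leq G$ such that for every non-empty subset $I\subseteq[n]$, the subgroup $\bigcap_{i\in I}H_i$ is finitely generated if and only if $c(I)=0$. A group $G$ is intersection-saturated if for every $n\geq 1$, every $n$-configuration is realisable in $G$. *)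

From mathcomp Require Import all_boot.
Set Implicit Arguments. Unset Strict Implicit. Unset Printing Implicit Defensive.

Record group := Group {
  carrier :> Type;
  gmul : carrier -> carrier -> carrier;
  ginv : carrier -> carrier;
  gone : carrier;
  gmulA : forall x y z, gmul x (gmul y z) = gmul (gmul x y) z;
  gmul1x : forall x, gmul gone x = x;
  gmulx1 : forall x, gmul x gone = x;
  gmulVx : forall x, gmul (ginv x) x = gone;
  gmulxV : forall x, gmul x (ginv x) = gone
}.

Section GroupDefs.
Variable G : group.

Definition is_subgroup (H : G -> Prop) : Prop :=
  H (gone G) /\ (forall x y, H x -> H y -> H (gmul x y)) /\
  (forall x, H x -> H (ginv x)).

Fixpoint inlist (S : seq G) (x : G) : Prop :=
  if S is y :: S' then y = x \/ inlist S' x else False.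

Inductive generated (S : seq G) : G -> Prop :=
| gen_in : forall x, inlist S x -> generated S x
| gen_one : generated S (gone G)
| gen_mul : forall x y, generated S x -> generated S y -> generated S (gmul x y)
| gen_inv : forall x, generated S x -> generated S (ginv x).

Definition fg_subgroup (H : G -> Prop) : Prop :=
  exists S : seq G, forall x, H x <-> generated S x.

Definition fg_group : Prop := fg_subgroup (fun _ => True).
End GroupDefs.

Definition is_hom (G1 G2 : group) (f : G1 -> G2) : Prop :=
  forall x y, f (gmul x y) = gmul (f x) (f y).

Definition is_automorphism (K : group) (f : K -> K) : Prop :=
  is_hom f /\ bijective f.

(* G contains a subgroup isomorphic to K: there is an injective
   homomorphism K -> G (its image is such a subgroup). *)
Definition embeds (K G : group) : Prop :=
  exists f : K -> G, is_hom f /\ injective f.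

Section Power.
Variables (K : group) (n : nat).
Definition pw_mul (x y : {ffun 'I_n -> K}) : {ffun 'I_n -> K} :=
  [ffun i => gmul (x i) (y i)].
Definition pw_inv (x : {ffun 'I_n -> K}) : {ffun 'I_n -> K} :=
  [ffun i => ginv (x i)].
Definition pw_one : {ffun 'I_n -> K} := [ffun=> gone K].
Lemma pw_mulA x y z : pw_mul x (pw_mul y z) = pw_mul (pw_mul x y) z.
Proof. by apply/ffunP=> i; rewrite !ffunE gmulA. Qed.
Lemma pw_mul1x x : pw_mul pw_one x = x.
Proof. by apply/ffunP=> i; rewrite !ffunE gmul1x. Qed.
Lemma pw_mulx1 x : pw_mul x pw_one = x.
Proof. by apply/ffunP=> i; rewrite !ffunE gmulx1. Qed.
Lemma pw_mulVx x : pw_mul (pw_inv x) x = pw_one.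
Proof. by apply/ffunP=> i; rewrite !ffunE gmulVx. Qed.
Lemma pw_mulxV x : pw_mul x (pw_inv x) = pw_one.
Proof. by apply/ffunP=> i; rewrite !ffunE gmulxV. Qed.
Definition power : group :=
  @Group {ffun 'I_n -> K} pw_mul pw_inv pw_one
    pw_mulA pw_mul1x pw_mulx1 pw_mulVx pw_mulxV.
End Power.

(* n-configurations: maps from nonempty subsets of [n] = 'I_n to {0,1};
   here c : {set 'I_n} -> bool (true = 1), whose value at set0 is ignored. *)
Definition realisable (G : group) (n : nat) (c : {set 'I_n} -> bool) : Prop :=
  exists Hs : 'I_n -> (G -> Prop),
    (forall i, is_subgroup (Hs i)) /\
    (forall I : {set 'I_n}, I != set0 ->
       (fg_subgroup (fun x => forall i, i \in I -> Hs i x) <-> c I = false)).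

Definition intersection_saturated (G : group) : Prop :=
  forall n : nat, 0 < n -> forall c : {set 'I_n} -> bool, realisable G c.

From Pilot Require Import Defs.
From mathcomp Require Import all_boot.
Set Implicit Arguments. Unset Strict Implicit. Unset Printing Implicit Defensive.

(* Given n and a configuration c, take K and f for N = 2^n * n and view K^N
   as one block K^n for every subset J of [n].  A block is a cycle of n
   edges, the last one twisted by f (it asks y_{n-1} = f y_0, the others
   y_{e+1} = y_e).  If c J = 1, the subgroup H_i is trivial on block J when
   i is not in J, and otherwise imposes edge i and every edge outside J;
   blocks with c J = 0 are left free.  On a block with c J = 1, the
   intersection over I is trivial unless I is contained in J; if I is a
   proper subset of J some edge is free, and cutting the cycle there
   untwists it, leaving a product of copies of K; if J = I it consists of the
   constant f-fixed sequences.  So the intersection is a retract of the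
   finitely generated group K^N when c I = 0, and maps onto Fix(f) when
   c I = 1. *)

Section GroupFacts.
Variable G : group.
Implicit Types x y : G.

Lemma ginv_unique x y : gmul y x = gone G -> y = ginv x.
Proof. by move=> yx1; rewrite -[y]gmulx1 -(gmulxV x) gmulA yx1 gmul1x. Qed.

Lemma ginv1 : ginv (gone G) = gone G.
Proof. by rewrite -[ginv _]gmulx1 gmulVx. Qed.

Lemma is_subgroup_meet (I : Type) (P : I -> Prop) (Hs : I -> G -> Prop) :
  (forall i, is_subgroup (Hs i)) -> is_subgroup (fun x => forall i, P i -> Hs i x).
Proof.
move=> Hs_sub; split; [|split].
- by move=> i _; case: (Hs_sub i).
- by move=> x y Hx Hy i Pi; apply: (Hs_sub i).2.1; [exact: Hx | exact: Hy].
- by move=> x Hx i Pi; apply: (Hs_sub i).2.2; exact: Hx.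
Qed.

End GroupFacts.

Section Homomorphisms.
Variables (G1 G2 : group) (p : G1 -> G2).
Hypothesis p_hom : is_hom p.

Lemma hom_one : p (gone G1) = gone G2.
Proof.
have := p_hom (gone G1) (gone G1); rewrite gmul1x => p1.
by rewrite -(gmulVx (p (gone G1))) {3}p1 gmulA gmulVx gmul1x.
Qed.

Lemma hom_inv x : p (ginv x) = ginv (p x).
Proof. by apply: ginv_unique; rewrite -p_hom gmulVx hom_one. Qed.

Lemma hom_can_inv q : cancel p q -> cancel q p -> is_hom q.
Proof. by move=> pK qK x y; apply: (can_inj pK); rewrite p_hom !qK. Qed.

Definition img (A : G1 -> Prop) (y : G2) : Prop := exists x, A x /\ p x = y.

Lemma img_subgroup A : is_subgroup A -> is_subgroup (img A).
Proof.
move=> [A1 [AM AV]]; split; first by exists (gone G1); split; last exact: hom_one.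
split.
- by move=> _ _ [x [Ax <-]] [y [Ay <-]]; exists (gmul x y); split; [exact: AM | exact: p_hom].
- by move=> _ [x [Ax <-]]; exists (ginv x); split; [exact: AV | exact: hom_inv].
Qed.

End Homomorphisms.

Section Generation.
Variable G : group.
Implicit Types (S : seq G) (A B : G -> Prop).

Lemma inlist_cat S S' x : inlist (S ++ S') x <-> inlist S x \/ inlist S' x.
Proof. elim: S => /= [|y S IH]; tauto. Qed.

Lemma generated_mono S S' x :
  (forall z, inlist S z -> inlist S' z) -> generated S x -> generated S' x.
Proof.
move=> SS'; elim=> {x} [x /SS'|||]; by [exact: gen_in | exact: gen_one
  | move=> *; apply: gen_mul | move=> *; apply: gen_inv].
Qed.

Lemma generated_min A S x :
  is_subgroup A -> (forall z, inlist S z -> A z) -> generated S x -> A x.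
Proof.
by move=> [A1 [AM AV]] SA; elim=> {x} [x /SA|||] // *; [exact: AM | exact: AV].
Qed.

Lemma fg_subgroup_ext A B : (forall x, A x <-> B x) -> fg_subgroup A -> fg_subgroup B.
Proof. by move=> AB [S AS]; exists S => x; apply: iff_trans (iff_sym (AB x)) (AS x). Qed.

End Generation.

Section GenerationMaps.
Variables (G1 G2 : group) (p : G1 -> G2).
Hypothesis p_hom : is_hom p.

Lemma inlist_map S x : inlist S x -> inlist (map p S) (p x).
Proof. by elim: S => //= y S IH [->|/IH]; [left | right]. Qed.

Lemma inlist_map_inv S y : inlist (map p S) y -> exists x, inlist S x /\ p x = y.
Proof.
elim: S => //= z S IH [<-|/IH [x [Sx <-]]]; first by exists z; split; first left.
by exists x; split; first right.
Qed.

Lemma generated_map S x : generated S x -> generated (map p S) (p x).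
Proof.
elim=> {x} [x /inlist_map|||]; first exact: gen_in.
- by rewrite hom_one //; exact: gen_one.
- by move=> x y _ Sx _ Sy; rewrite p_hom; exact: gen_mul.
- by move=> x _ Sx; rewrite hom_inv //; exact: gen_inv.
Qed.

Lemma generated_map_inv S y :
  generated (map p S) y -> exists x, generated S x /\ p x = y.
Proof.
elim=> {y} [y /inlist_map_inv [x [Sx <-]]|||]; first by exists x; split; first exact: gen_in.
- by exists (gone G1); split; [exact: gen_one | exact: hom_one].
- move=> _ _ _ [x [Sx <-]] _ [y [Sy <-]].
  by exists (gmul x y); split; [exact: gen_mul | exact: p_hom].
- move=> _ _ [x [Sx <-]].
  by exists (ginv x); split; [exact: gen_inv | exact: hom_inv].
Qed.

Lemma fg_img A : fg_subgroup A -> fg_subgroup (img p A).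
Proof.
move=> [S AS]; exists (map p S) => y; split.
- by move=> [x [/AS Sx <-]]; exact: generated_map.
- by move=> /generated_map_inv [x [/AS Ax <-]]; exists x.
Qed.

Lemma inlist_lift A (S : seq G2) :
  (forall y, inlist S y -> img p A y) ->
  exists S' : seq G1, map p S' = S /\ forall x, inlist S' x -> A x.
Proof.
elim: S => [|y S IH] SA; first by exists [::].
have [x [Ax <-]] := SA y (or_introl erefl).
have [S' [<- S'A]] := IH (fun z Sz => SA z (or_intror Sz)).
by exists (x :: S'); split=> // z [<-|/S'A].
Qed.

Lemma fg_of_img A :
  injective p -> is_subgroup A -> fg_subgroup (img p A) -> fg_subgroup A.
Proof.
move=> p_inj A_sub [S AS].
have [S' [eS S'A]] := inlist_lift (fun y Sy => proj2 (AS y) (gen_in Sy)).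
rewrite -eS in AS; exists S' => x; split; last exact: generated_min.
move=> Ax; have /AS/generated_map_inv [x' [S'x' /p_inj <-]] // : img p A (p x).
by exists x.
Qed.

End GenerationMaps.

Section FinitePower.
Variables (K : group) (T : finType).

Definition fpow_mul (x y : {ffun T -> K}) : {ffun T -> K} := [ffun i => gmul (x i) (y i)].
Definition fpow_inv (x : {ffun T -> K}) : {ffun T -> K} := [ffun i => ginv (x i)].
Definition fpow_one : {ffun T -> K} := [ffun=> gone K].

Lemma fpow_mulA x y z : fpow_mul x (fpow_mul y z) = fpow_mul (fpow_mul x y) z.
Proof. by apply/ffunP=> i; rewrite !ffunE gmulA. Qed.
Lemma fpow_mul1x x : fpow_mul fpow_one x = x.
Proof. by apply/ffunP=> i; rewrite !ffunE gmul1x. Qed.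
Lemma fpow_mulx1 x : fpow_mul x fpow_one = x.
Proof. by apply/ffunP=> i; rewrite !ffunE gmulx1. Qed.
Lemma fpow_mulVx x : fpow_mul (fpow_inv x) x = fpow_one.
Proof. by apply/ffunP=> i; rewrite !ffunE gmulVx. Qed.
Lemma fpow_mulxV x : fpow_mul x (fpow_inv x) = fpow_one.
Proof. by apply/ffunP=> i; rewrite !ffunE gmulxV. Qed.

Definition fpower : group :=
  @Defs.Group {ffun T -> K} fpow_mul fpow_inv fpow_one
    fpow_mulA fpow_mul1x fpow_mulx1 fpow_mulVx fpow_mulxV.

Implicit Types x y : fpower.

Lemma fpower_mulE x y i : gmul x y i = gmul (x i) (y i).
Proof. exact: ffunE. Qed.

Lemma fpower_invE x i : ginv x i = ginv (x i).
Proof. exact: ffunE. Qed.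

Lemma fpower_oneE i : gone fpower i = gone K.
Proof. exact: ffunE. Qed.

Lemma fpower_eval_hom i : is_hom (fun x : fpower => x i).
Proof. by move=> x y; rewrite fpower_mulE. Qed.

Definition fsingle (j : T) (a : K) : fpower := [ffun k => if k == j then a else gone K].

Lemma fsingle_hom j : is_hom (fsingle j).
Proof.
move=> a b; apply/ffunP=> k; rewrite fpower_mulE !ffunE.
by case: (k == j); rewrite ?gmul1x.
Qed.

Lemma fpower_fg : fg_group K -> fg_group fpower.
Proof.
move=> [S S_gen].
pose gens l := flatten [seq map (fsingle j) S | j <- l].
exists (gens (enum T)) => x; split=> // _.
suff gen_supp l y : (forall k, k \notin l -> y k = gone K) -> generated (gens l) y.
  by apply: gen_supp => k; rewrite mem_enum.
elim: l y => [|j l IH] y y_supp.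
  have -> : y = gone fpower by apply/ffunP=> k; rewrite fpower_oneE y_supp.
  exact: gen_one.
have -> : y = gmul (fsingle j (y j)) [ffun k => if k == j then gone K else y k].
  apply/ffunP=> k; rewrite fpower_mulE !ffunE.
  by case: eqP => [->|_]; rewrite ?gmulx1 ?gmul1x.
apply: gen_mul.
  apply: (@generated_mono _ (map (fsingle j) S)) => [z zj|]; first by apply/inlist_cat; left.
  by apply: generated_map; [exact: fsingle_hom | exact/S_gen].
apply: (@generated_mono _ (gens l)) => [z zl|]; first by apply/inlist_cat; right.
apply: IH => k; rewrite ffunE; case: eqP => // /eqP kj kl.
by apply: y_supp; rewrite inE negb_or kj.
Qed.

Lemma embeds_fpower (G : group) : embeds (power K #|T|) G -> embeds fpower G.
Proof.
case=> e [e_hom e_inj].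
exists (fun x : fpower => e [ffun k => x (enum_val k)]); split.
  move=> x y; rewrite -e_hom; congr e.
  by apply/ffunP => k; rewrite /= /pw_mul !ffunE.
move=> x y /e_inj /ffunP exy; apply/ffunP => i.
by have := exy (enum_rank i); rewrite !ffunE enum_rankK.
Qed.

End FinitePower.

Lemma realisable_embeds (P G : group) n (c : {set 'I_n} -> bool) :
  embeds P G -> realisable P c -> realisable G c.
Proof.
case=> e [e_hom e_inj] [Hs [Hs_sub Hs_fg]].
exists (fun i => img e (Hs i)); split=> [i|I I0]; first exact: img_subgroup.
pose meet x := forall i, i \in I -> Hs i x.
have meet_img z : (forall i, i \in I -> img e (Hs i) z) <-> img e meet z.
  split=> [Hz|[x [Hx <-]] i iI]; last by exists x; split; first exact: Hx.
  have [i0 i0I] := set0Pn _ I0; have [x [_ ex]] := Hz i0 i0I.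
  exists x; split=> // i iI; have [x' [Hx' ex']] := Hz i iI.
  by rewrite -(e_inj _ _ (etrans ex' (esym ex))).
apply: iff_trans (Hs_fg I I0); split=> [fg_meet|].
  apply: (fg_of_img e_hom e_inj); first exact: is_subgroup_meet.
  exact: fg_subgroup_ext meet_img fg_meet.
by move=> /(fg_img e_hom); apply: fg_subgroup_ext => z; apply: iff_sym.
Qed.

Section TwistedCycle.
Variables (K : group) (f g : K -> K) (m : nat).
Hypotheses (fK : cancel f g) (gK : cancel g f).
Local Notation node := 'I_m.+1.
Implicit Types (y t : node -> K) (e j cut : node) (M : {set node}).

Definition cyc_succ e : node := if e < m then inord e.+1 else ord0.

Definition edge_ok y e : Prop :=
  if e < m then y (cyc_succ e) = y e else y e = f (y ord0).

Definition edges_ok M y : Prop := forall e, e \notin M -> edge_ok y e.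

Lemma eq_edges_ok M y y' : y =1 y' -> edges_ok M y -> edges_ok M y'.
Proof. by move=> yy' y_ok e /y_ok; rewrite /edge_ok !yy'. Qed.

Lemma edges_ok_fixed y : edges_ok set0 y -> f (y ord0) = y ord0.
Proof.
move=> y_ok; have {}y_ok e : edge_ok y e by apply: y_ok; rewrite inE.
have y_const k : k < m.+1 -> y (inord k) = y ord0.
  elim: k => [_|k IH km]; first by congr y; apply/val_inj; rewrite /= inordK.
  have k_lt_m : k < m by [].
  have := y_ok (inord k); rewrite /edge_ok /cyc_succ inordK ?k_lt_m ?(ltnW km) // => ->.
  exact: IH (ltnW km).
by have := y_ok (inord m); rewrite /edge_ok inordK // ltnn y_const // => ->.
Qed.

Definition untwist (h : K -> K) cut y j : K := if j <= cut then h (y j) else y j.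

Lemma untwistK h h' : cancel h h' -> forall cut y j, untwist h' cut (untwist h cut y) j = y j.
Proof. by move=> hK cut y j; rewrite /untwist; case: (j <= cut). Qed.

(* Untwisting the nodes up to [cut] moves the twist from the last edge onto
   [cut]; every other edge condition becomes a plain equality. *)
Lemma edge_ok_untwist cut y e :
  e != cut -> untwist f cut y (cyc_succ e) = untwist f cut y e <-> edge_ok y e.
Proof.
move=> e_cut; have e_cut' : (e : nat) != cut by [].
rewrite /edge_ok /cyc_succ /untwist; case: ltnP => em.
  rewrite inordK; last by rewrite ltnS.
  have -> : (e.+1 <= cut) = (e <= cut).
    by apply/idP/idP => [/ltnW|e_le]; last rewrite ltn_neqAle e_cut' e_le.
  by case: (e <= cut); split=> [fe|->] //; rewrite -[LHS]fK fe fK.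
have -> : (e <= cut) = false.
  apply/negbTE; rewrite -ltnNge ltn_neqAle eq_sym e_cut' /=.
  by apply: leq_trans em; rewrite -ltnS.
by rewrite leq0n; split=> ->.
Qed.

Definition cut_rel M : rel node :=
  fun a b => (a \notin M) && (b == cyc_succ a) || (b \notin M) && (a == cyc_succ b).

Lemma cut_rel_sym M : symmetric (cut_rel M).
Proof. by move=> a b; rewrite /cut_rel orbC. Qed.

Lemma root_cut_rel_succ M e :
  e \notin M -> root (cut_rel M) (cyc_succ e) = root (cut_rel M) e.
Proof.
move=> eM; apply/eqP; rewrite (root_connect (sym_connect_sym (@cut_rel_sym M))).
by apply: connect1; rewrite /cut_rel eM eqxx orbT.
Qed.

Lemma root_cut_rel_eq M (z : node -> K) j :
  (forall e, e \notin M -> z (cyc_succ e) = z e) -> z (root (cut_rel M) j) = z j.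
Proof.
move=> z_const; have /connectP [p p_path ->] := connect_root (cut_rel M) j.
elim: p j p_path => //= a p IH j /andP [ja /IH ->].
by case/orP: ja => /andP [eM /eqP ->]; rewrite z_const.
Qed.

(* The free edges [M] cut the cycle into arcs; [straighten] makes [t]
   constant on each arc and then twists it back at [cut \in M]. *)
Definition straighten M cut t : node -> K :=
  untwist g cut (fun k => t (root (cut_rel M) k)).

Lemma eq_straighten M cut t t' j : t =1 t' -> straighten M cut t j = straighten M cut t' j.
Proof. by move=> tt'; rewrite /straighten /untwist tt'. Qed.

Lemma edges_ok_straighten M cut t : cut \in M -> edges_ok M (straighten M cut t).
Proof.
move=> cutM e eM; have e_cut : e != cut by apply: contraNneq eM => ->.
by apply/(edge_ok_untwist _ e_cut); rewrite /straighten !(untwistK gK) root_cut_rel_succ.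
Qed.

Lemma straightenK M cut y j :
  cut \in M -> edges_ok M y -> straighten M cut (untwist f cut y) j = y j.
Proof.
move=> cutM y_ok.
have y_arcs e : e \notin M -> untwist f cut y (cyc_succ e) = untwist f cut y e.
  by move=> eM; apply/edge_ok_untwist; [apply: contraNneq eM => -> | exact: y_ok].
have := root_cut_rel_eq j y_arcs; rewrite /straighten /untwist => ->.
by case: (j <= cut).
Qed.

End TwistedCycle.

Definition cfg_index (m : nat) : finType := ({set 'I_m.+1} * 'I_m.+1)%type.

Section Configuration.
Variables (K : group) (f g : K -> K) (m : nat) (c : {set 'I_m.+1} -> bool).
Hypotheses (f_hom : is_hom f) (fK : cancel f g) (gK : cancel g f).
Local Notation node := 'I_m.+1.
Local Notation cfg := (fpower K (cfg_index m)).
Implicit Types (x t : cfg) (i : node) (I J : {set node}).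

Definition block x J : node -> K := fun k => x (J, k).

Definition cfg_subgroup i x : Prop :=
  forall J, c J ->
    (i \notin J -> forall k, x (J, k) = gone K) /\
    (i \in J -> edges_ok f (J :\ i) (block x J)).

Definition cfg_meet I x : Prop := forall i, i \in I -> cfg_subgroup i x.

Lemma is_subgroup_cfg i : is_subgroup (cfg_subgroup i).
Proof.
split; [|split].
- move=> J cJ; split=> [_ k|_ e _]; first exact: fpower_oneE.
  by rewrite /edge_ok /block !fpower_oneE; case: (_ < m); rewrite ?hom_one.
- move=> x y Hx Hy J cJ; split=> [iJ k|iJ e eJ].
    by rewrite fpower_mulE (Hx J cJ).1 // (Hy J cJ).1 // gmul1x.
  move: ((Hx J cJ).2 iJ e eJ) ((Hy J cJ).2 iJ e eJ).
  by rewrite /edge_ok /block !fpower_mulE; case: (_ < m) => -> ->.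
- move=> x Hx J cJ; split=> [iJ k|iJ e eJ].
    by rewrite fpower_invE (Hx J cJ).1 // ginv1.
  move: ((Hx J cJ).2 iJ e eJ).
  by rewrite /edge_ok /block !fpower_invE; case: (_ < m) => ->; rewrite ?hom_inv.
Qed.

Lemma cfg_meetP I x : I != set0 ->
  cfg_meet I x <-> forall J, c J ->
    (~~ (I \subset J) -> forall k, x (J, k) = gone K) /\
    (I \subset J -> edges_ok f (J :\: I) (block x J)).
Proof.
move=> /set0Pn [i0 i0I]; split=> [x_meet J cJ|x_ok i iI J cJ]; split.
- by case/subsetPn=> i iI iJ; exact: (x_meet i iI J cJ).1.
- move=> IJ e; rewrite inE negb_and negbK => /orP [eI|eJ].
    by apply: (x_meet e eI J cJ).2; rewrite ?(subsetP IJ) // !inE eqxx.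
  by apply: (x_meet i0 i0I J cJ).2; rewrite ?(subsetP IJ) // !inE (negbTE eJ) andbF.
- by move=> iJ; apply: (x_ok J cJ).1; apply/subsetPn; exists i.
- move=> iJ e; rewrite !inE negb_and negbK => e_out.
  have [IJ|IJ] := boolP (I \subset J).
    apply: (x_ok J cJ).2 => //; rewrite !inE negb_and negbK.
    by case/orP: e_out => [/eqP ->|->]; rewrite ?iI ?orbT.
  rewrite /edge_ok /block !(x_ok J cJ).1 //.
  by case: (_ < m); rewrite ?hom_one.
Qed.

Lemma meet_fixed I x : I != set0 -> c I -> cfg_meet I x -> f (x (I, ord0)) = x (I, ord0).
Proof.
move=> I0 cI /(cfg_meetP _ I0) x_ok; apply: (edges_ok_fixed (y := block x I)).
by have := (x_ok I cI).2 (subxx I); rewrite setDv.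
Qed.

Definition block_const I (a : K) : cfg := [ffun p => if p.1 == I then a else gone K].

Lemma block_const_meet I a : I != set0 -> f a = a -> cfg_meet I (block_const I a).
Proof.
move=> I0 fa; apply/(cfg_meetP _ I0) => J cJ; split=> [IJ k|_ e _].
  by rewrite ffunE /=; case: eqP => // JI; rewrite JI subxx in IJ.
by rewrite /edge_ok /block !ffunE /=; case: (J == I); case: (_ < m); rewrite ?hom_one.
Qed.

Definition cut_edge I J : node := odflt ord0 [pick k in J :\: I].

Lemma cut_edge_in I J : I \subset J -> J != I -> cut_edge I J \in J :\: I.
Proof.
move=> IJ JI; rewrite /cut_edge; case: pickP => //= JI0.
case/eqP: JI; apply/eqP; rewrite eqEsubset IJ andbT.
by rewrite -setD_eq0; apply/eqP/setP => k; rewrite JI0 inE.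
Qed.

Definition cut_retract I t : cfg :=
  [ffun p => if c p.1 then
     (if I \subset p.1 then straighten g (p.1 :\: I) (cut_edge I p.1) (block t p.1) p.2
      else gone K)
   else t p].

Definition cut_untwist I x : cfg :=
  [ffun p => if c p.1 && (I \subset p.1) then untwist f (cut_edge I p.1) (block x p.1) p.2
             else x p].

Lemma cut_retract_hom I : is_hom (cut_retract I).
Proof.
have g_hom := hom_can_inv f_hom fK gK.
move=> t u; apply/ffunP => p; rewrite fpower_mulE !ffunE.
case: (c p.1) => //.
case: (I \subset p.1); last by rewrite gmul1x.
by rewrite /straighten /untwist /block !fpower_mulE; case: ifP; rewrite ?g_hom.
Qed.

Section FreeIndexSet.
Variable I : {set node}.
Hypotheses (I0 : I != set0) (cI : c I = false).

Lemma cut_edge_free J : c J -> I \subset J -> cut_edge I J \in J :\: I.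
Proof. by move=> cJ IJ; apply: cut_edge_in => //; apply: contraTneq cJ => ->; rewrite cI. Qed.

Lemma cut_retract_meet t : cfg_meet I (cut_retract I t).
Proof.
apply/(cfg_meetP _ I0) => J cJ; split=> [IJ k|IJ]; first by rewrite ffunE /= cJ (negbTE IJ).
apply: (eq_edges_ok _ (edges_ok_straighten fK gK _ (cut_edge_free cJ IJ))) => k.
by rewrite /block ffunE /= cJ IJ.
Qed.

Lemma cut_retractK x : cfg_meet I x -> cut_retract I (cut_untwist I x) = x.
Proof.
move=> /(cfg_meetP _ I0) x_ok; apply/ffunP => -[J j]; rewrite ffunE /=.
case cJ: (c J); last by rewrite ffunE /= cJ.
have [IJ|IJ] := boolP (I \subset J); last by rewrite ((x_ok J cJ).1 IJ).
rewrite -/(block x J j) -(straightenK fK j (cut_edge_free cJ IJ) ((x_ok J cJ).2 IJ)).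
by apply: eq_straighten => k; rewrite /block ffunE /= cJ IJ.
Qed.

End FreeIndexSet.

Lemma cfg_realisable :
  fg_group K -> ~ fg_subgroup (fun a : K => f a = a) -> realisable cfg c.
Proof.
move=> K_fg Fix_nfg; exists cfg_subgroup; split=> [|I I0]; first exact: is_subgroup_cfg.
split=> [meet_fg|cI].
  case cI: (c I) => //; case: Fix_nfg.
  apply: fg_subgroup_ext (fg_img (fpower_eval_hom (I, ord0)) meet_fg) => a.
  split=> [[x [x_meet <-]]|fa]; first exact: meet_fixed.
  by exists (block_const I a); split; [exact: block_const_meet | rewrite ffunE /= eqxx].
apply: fg_subgroup_ext (fg_img (cut_retract_hom I) (fpower_fg _ K_fg)) => x.
split=> [[t [_ <-]]|x_meet]; first exact: cut_retract_meet.
by exists (cut_untwist I x); split; last exact: cut_retractK.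
Qed.

End Configuration.

Theorem theoremA (G : group)
  (hyp : forall n : nat, 0 < n ->
     exists (K : group) (f : K -> K),
       fg_group K /\ is_automorphism f /\
       ~ fg_subgroup (fun x : K => f x = x) /\
       embeds (power K n) G) :
  intersection_saturated G.
Proof.
move=> [|m] // _ c.
have [|K [f [K_fg [[f_hom [g fK gK]] [Fix_nfg KG]]]]] := hyp #|cfg_index m|.
  by apply/card_gt0P; exists (set0, ord0).
apply: realisable_embeds (embeds_fpower KG) _.
exact: cfg_realisable f_hom fK gK K_fg Fix_nfg.
Qed.
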